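(* Consider a classical elementary system with timelike four-momentum in explicit form (i) or (ii). Let $\mathbf A\colon\Gamma\to\mathbb R^3$ be $C^1$, invariant under spatial translations ($\{P_a,A_b\}=0$), transforming as a vector under spatial rotations ($\{J_{ab},A_c\}=\delta_{ac}A_b-\delta_{bc}A_a$), and invariant under time reversal ($\mathbf A\circ T_u=\mathbf A$). Then $\mathbf A\cdot\mathbf P=0$ on all of $\Gamma$.
   Context: Fix a positively oriented orthonormal basis $\{e_0=u,\dots,e_3\}$ of Minkowski space (signature $(-,+,+,+)$), speed of light $c>0$, $m>0$. Spatial indices raised/lowered with Kronecker delta; ${}^{(3)}\varepsilon_{abc}$ Levi-Civita symbol; $(\mathbf A\times\mathbf B)_a={}^{(3)}\varepsilon_{abc}A^bB^c$. Poisson bracket: $\omega(X_f,\cdot)=df$, $\{f,g\}=\omega(X_f,X_g)$, so $\{x^a,p_b\}=\delta^a_b$. (i) spin zero ($\mathbf s:=0$): $\Gamma=T^*\mathbb R^3\ni(\mathbf x,\mathbf p)$, $\omega=dx^a\wedge dp_a$; $P_a=p_a$, $P_0=-\sqrt{m^2c^2+\mathbf p^2}$, $J_{ab}=x_ap_b-x_bp_a$, $J_{a0}=P_0x_a$; time reversal $T_u(\mathbf x,\mathbf p)=(\mathbf x,-\mathbf p)$. (ii) spin $S>0$: $\Gamma=T^*\mathbb R^3\times\mathsf S^2\ni(\mathbf x,\mathbf p,\hat{\mathbf s})$, $\omega=dx^a\wedge dp_a+S\,d\Omega^2$; $\mathbf s=S\hat{\mathbf s}$, $\{s_a,s_b\}={}^{(3)}\varepsilon_{abc}s^c$,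 $\mathbf s$ Poisson-commuting with $\mathbf x,\mathbf p$; $P_a=p_a$, $P_0=-\sqrt{m^2c^2+\mathbf p^2}$, $J_{ab}=x_ap_b-x_bp_a+{}^{(3)}\varepsilon_{abc}s^c$, $J_{a0}=P_0x_a-\frac{(\mathbf p\times\mathbf s)_a}{mc-P_0}$; time reversal $T_u(\mathbf x,\mathbf p,\hat{\mathbf s})=(\mathbf x,-\mathbf p,-\hat{\mathbf s})$. *)

From HB Require Import structures.
From mathcomp Require Import all_boot all_order all_algebra.
From mathcomp Require Import all_classical all_reals all_analysis.
Set Implicit Arguments. Unset Strict Implicit. Unset Printing Implicit Defensive.
Import Order.TTheory GRing.Theory Num.Theory.
Import numFieldNormedType.Exports.
Local Open Scope ring_scope.

Section Defs.
Variable R : realType.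

Notation V3 := 'rV[R]_3.

Definition e3 (j : 'I_3) : V3 := delta_mx 0 j.

(* Levi-Civita symbol on indices {0,1,2}:
   eps a b c = (b-a)(c-a)(c-b)/2, which is +1 on even permutations of (0,1,2),
   -1 on odd ones and 0 when two indices coincide. *)
Definition eps3 (a b c : 'I_3) : R :=
  ((b%:Z - a%:Z) * (c%:Z - a%:Z) * (c%:Z - b%:Z))%:~R / 2.

Definition kdelta (a b : 'I_3) : R := (a == b)%:R.

Definition dot3 (u v : V3) : R := \sum_(a < 3) u 0 a * v 0 a.

Definition cross3 (u v : V3) : V3 :=
  \row_(a < 3) \sum_(b < 3) \sum_(c < 3) eps3 a b c * u 0 b * v 0 c.

(* C^1 on a finite-dimensional normed space: differentiable everywhere with
   continuous (directional, hence all partial) derivatives. *)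
Definition C1 (U W : normedModType R) (f : U -> W) : Prop :=
  (forall z, differentiable f z) /\ (forall v : U, continuous (fun z => 'D_v f z)).

Definition Gamma0 := (V3 * V3)%type.
Definition dx0 (a : 'I_3) : Gamma0 := (e3 a, 0).
Definition dp0 (a : 'I_3) : Gamma0 := (0, e3 a).

(* Poisson bracket of omega = dx^a /\ dp_a with {x^a,p_b} = delta^a_b *)
Definition pb0 (f g : Gamma0 -> R) (z : Gamma0) : R :=
  \sum_(a < 3) ('D_(dx0 a) f z * 'D_(dp0 a) g z - 'D_(dp0 a) f z * 'D_(dx0 a) g z).

Definition P0_i (a : 'I_3) (z : Gamma0) : R := z.2 0 a.
Definition P0_0 (m c : R) (z : Gamma0) : R := - Num.sqrt (m ^+ 2 * c ^+ 2 + dot3 z.2 z.2).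
Definition J0 (a b : 'I_3) (z : Gamma0) : R :=
  z.1 0 a * z.2 0 b - z.1 0 b * z.2 0 a.
Definition J0_0 (m c : R) (a : 'I_3) (z : Gamma0) : R := P0_0 m c z * z.1 0 a.
Definition T0 (z : Gamma0) : Gamma0 := (z.1, - z.2).

(* A point is (x, p, shat); Gamma itself is the subset where |shat| = 1.
   Functions on Gamma are represented by (C^1) functions on R^3 x R^3 x R^3,
   of which only the restriction to Gamma matters. *)
Definition Gamma1 := (V3 * V3 * V3)%type.
Definition on_Gamma1 (z : Gamma1) : Prop := dot3 z.2 z.2 = 1.
Definition x1 (z : Gamma1) : V3 := z.1.1.
Definition p1 (z : Gamma1) : V3 := z.1.2.
Definition sh1 (z : Gamma1) : V3 := z.2.
Definition dx1 (a : 'I_3) : Gamma1 := (e3 a, 0, 0).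
Definition dp1 (a : 'I_3) : Gamma1 := (0, e3 a, 0).
Definition ds1 (a : 'I_3) : Gamma1 := (0, 0, e3 a).

Definition grads (f : Gamma1 -> R) (z : Gamma1) : V3 := \row_(a < 3) 'D_(ds1 a) f z.

(* Poisson bracket of omega = dx^a /\ dp_a + S dOmega^2: the canonical part plus
   the sphere part  {f,g} = S^-1 shat . (grad_shat f x grad_shat g),
   i.e. s . (grad_s f x grad_s g) with s = S shat; this gives
   {s_a,s_b} = eps_abc s^c and {s, x} = {s, p} = 0, {x^a,p_b} = delta^a_b. *)
Definition pb1 (S : R) (f g : Gamma1 -> R) (z : Gamma1) : R :=
  \sum_(a < 3) ('D_(dx1 a) f z * 'D_(dp1 a) g z - 'D_(dp1 a) f z * 'D_(dx1 a) g z)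
  + S^-1 * dot3 (sh1 z) (cross3 (grads f z) (grads g z)).

Definition s1 (S : R) (z : Gamma1) : V3 := S *: sh1 z.
Definition P1_i (a : 'I_3) (z : Gamma1) : R := p1 z 0 a.
Definition P1_0 (m c : R) (z : Gamma1) : R := - Num.sqrt (m ^+ 2 * c ^+ 2 + dot3 (p1 z) (p1 z)).
Definition J1 (S : R) (a b : 'I_3) (z : Gamma1) : R :=
  x1 z 0 a * p1 z 0 b - x1 z 0 b * p1 z 0 a
  + \sum_(c < 3) eps3 a b c * s1 S z 0 c.
Definition J1_0 (S m c : R) (a : 'I_3) (z : Gamma1) : R :=
  P1_0 m c z * x1 z 0 a - cross3 (p1 z) (s1 S z) 0 a / (m * c - P1_0 m c z).
Definition T1 (z : Gamma1) : Gamma1 := (x1 z, - p1 z, - sh1 z).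

End Defs.
Arguments kdelta {R}.
Arguments eps3 {R}.
Arguments e3 {R}.
Arguments dx0 {R}.
Arguments dp0 {R}.
Arguments dx1 {R}.
Arguments dp1 {R}.
Arguments ds1 {R}.

(* Fix a point
   and a unit axis n orthogonal to the momentum p (and, with spin, to the spin
   direction shat), and rotate (p, shat) about n by the angle t, keeping the
   position fixed.  Translation invariance kills the position derivatives of
   A, so rotational covariance says that along this flow A moves by n x A,
   exactly as p does; hence A . p is constant in t.  At t = pi the rotated
   state is the time-reversed one, so A . p = A . (-p) and A . p = 0.

   The spin-zero case follows by
   lifting A along the projection (x, p, shat) |-> (x, p) ([pb1_lift]). *)

From HB Require Import structures.
From mathcomp Require Import all_boot all_order all_algebra.
From mathcomp Require Import all_classical all_reals all_analysis.
From mathcomp Require Import ring lra.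
Import Order.TTheory GRing.Theory Num.Theory.
Import numFieldNormedType.Exports.
Set Implicit Arguments. Unset Strict Implicit. Unset Printing Implicit Defensive.
Local Open Scope ring_scope.
Local Open Scope classical_set_scope.

Definition i0 : 'I_3 := @Ordinal 3 0 isT.
Definition i1 : 'I_3 := @Ordinal 3 1 isT.
Definition i2 : 'I_3 := @Ordinal 3 2 isT.

Lemma ord3P (i : 'I_3) : [\/ i = i0, i = i1 | i = i2].
Proof.
by case: i => -[|[|[|k]]] hk //; [constructor 1|constructor 2|constructor 3];
  apply: val_inj.
Qed.

Lemma sum3 (V : nmodType) (F : 'I_3 -> V) : \sum_(i < 3) F i = F i0 + F i1 + F i2.
Proof.
rewrite !big_ord_recr big_ord0 /= add0r.
by congr (F _ + F _ + F _); apply: val_inj.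
Qed.

Section Vectors.
Variable R : realType.
Local Notation V3 := 'rV[R]_3.

Lemma dot3E (u v : V3) :
  dot3 u v = u 0 i0 * v 0 i0 + u 0 i1 * v 0 i1 + u 0 i2 * v 0 i2.
Proof. by rewrite /dot3 sum3. Qed.

Lemma cross3_0 (u v : V3) : cross3 u v 0 i0 = u 0 i1 * v 0 i2 - u 0 i2 * v 0 i1.
Proof. rewrite /cross3 mxE !sum3 /eps3 !intrM !intrB /=; lra. Qed.
Lemma cross3_1 (u v : V3) : cross3 u v 0 i1 = u 0 i2 * v 0 i0 - u 0 i0 * v 0 i2.
Proof. rewrite /cross3 mxE !sum3 /eps3 !intrM !intrB /=; lra. Qed.
Lemma cross3_2 (u v : V3) : cross3 u v 0 i2 = u 0 i0 * v 0 i1 - u 0 i1 * v 0 i0.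
Proof. rewrite /cross3 mxE !sum3 /eps3 !intrM !intrB /=; lra. Qed.
Definition cross3E := (cross3_0, cross3_1, cross3_2).

Definition eps_row (a b : 'I_3) : V3 := \row_c eps3 a b c.

Lemma eps_row_cyclic :
  [/\ eps_row i1 i2 = e3 i0, eps_row i2 i0 = e3 i1 & eps_row i0 i1 = e3 i2].
Proof.
split; apply/rowP => c; rewrite !mxE /eps3 !intrM !intrB;
  by case: (ord3P c) => ->; rewrite /=; lra.
Qed.

Lemma dot3C (u v : V3) : dot3 u v = dot3 v u.
Proof. by rewrite !dot3E; ring. Qed.

Lemma dot3Zl (k : R) (u v : V3) : dot3 (k *: u) v = k * dot3 u v.
Proof. by rewrite !dot3E !mxE; ring. Qed.

Lemma dot3_ge0 (u : V3) : 0 <= dot3 u u.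
Proof. by rewrite dot3E; nra. Qed.

Lemma dot3_eq0 (u : V3) : dot3 u u = 0 -> u = 0.
Proof.
rewrite dot3E => h; apply/rowP => i; rewrite mxE.
by case: (ord3P i) => ->; nra.
Qed.

Lemma dot3Zr (k : R) (u v : V3) : dot3 u (k *: v) = k * dot3 u v.
Proof. by rewrite dot3C dot3Zl dot3C. Qed.

Lemma dot3_0r (u : V3) : dot3 u 0 = 0.
Proof. by rewrite /dot3 big1 // => i _; rewrite mxE mulr0. Qed.

Lemma dot3_e3r (u : V3) (j : 'I_3) : dot3 u (e3 j) = u 0 j.
Proof.
by rewrite dot3E /e3 !mxE; case: (ord3P j) => ->; rewrite /=; ring.
Qed.

Lemma sum_e3 (F : 'I_3 -> R) (b : 'I_3) : \sum_(d < 3) e3 d 0 b * F d = F b.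
Proof.
by rewrite sum3 /e3 !mxE; case: (ord3P b) => ->; rewrite /=; ring.
Qed.

Lemma cross3Zl (k : R) (u v : V3) : cross3 (k *: u) v = k *: cross3 u v.
Proof.
by apply/rowP => i; case: (ord3P i) => ->; rewrite !(cross3E, mxE); ring.
Qed.

Lemma cross3_0l (v : V3) : cross3 0 v = 0.
Proof.
by apply/rowP => i; case: (ord3P i) => ->; rewrite !(cross3E, mxE); ring.
Qed.

Lemma cross3_0r (u : V3) : cross3 u 0 = 0.
Proof.
by apply/rowP => i; case: (ord3P i) => ->; rewrite !(cross3E, mxE); ring.
Qed.

(* [n x (.)] is skew-adjoint: the scalar triple product is alternating. *)
Lemma dot3_cross_skew (n u v : V3) : dot3 (cross3 n u) v + dot3 u (cross3 n v) = 0.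
Proof. by rewrite !dot3E !cross3E; ring. Qed.

Lemma dot3_cross_self (u v : V3) : dot3 (cross3 u v) u = 0 /\ dot3 (cross3 u v) v = 0.
Proof. by rewrite !dot3E !cross3E; split; ring. Qed.

Lemma cross3_cross (a b c : V3) :
  cross3 a (cross3 b c) = dot3 a c *: b - dot3 a b *: c.
Proof.
apply/rowP => i; case: (ord3P i) => ->;
  by rewrite !cross3E !mxE !dot3E; ring.
Qed.

Lemma unit_rescale (w : V3) : dot3 w w != 0 -> exists k : R, dot3 (k *: w) (k *: w) = 1.
Proof.
move=> w0; have wpos : 0 < dot3 w w by rewrite lt_def w0 dot3_ge0.
exists (Num.sqrt (dot3 w w))^-1.
rewrite dot3Zl dot3C dot3Zl mulrA -expr2 exprVn sqr_sqrtr ?dot3_ge0 //.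
by rewrite mulVf.
Qed.

(* Every vector has a unit normal: rescale [e_2 x u], or take [e_0]
   when [u] lies on the [e_2] axis. *)
Lemma exists_unit_normal (u : V3) : exists n : V3, dot3 n n = 1 /\ dot3 n u = 0.
Proof.
set w := cross3 (e3 i2) u.
have [w0|w0] := eqVneq (dot3 w w) 0; last first.
  have [k hk] := unit_rescale w0.
  by exists (k *: w); split => //; rewrite dot3Zl (dot3_cross_self _ _).2 mulr0.
exists (e3 i0); move: w0; rewrite /w !dot3E !cross3E /e3 !mxE /=.
by split; nra.
Qed.

Lemma exists_common_unit_normal (u s : V3) :
  exists n : V3, [/\ dot3 n n = 1, dot3 n u = 0 & dot3 n s = 0].
Proof.
set w := cross3 u s.
have [w0|w0] := eqVneq (dot3 w w) 0; last first.
  have [k hk] := unit_rescale w0.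
  have [wu ws] := dot3_cross_self u s.
  by exists (k *: w); split => //; rewrite dot3Zl ?wu ?ws mulr0.
have [s0|s0] := eqVneq (dot3 s s) 0.
  have [n [nn nu]] := exists_unit_normal u.
  by exists n; rewrite (dot3_eq0 s0) dot3_0r.
have [n [nn ns]] := exists_unit_normal s.
exists n; split => //.
(* [u] is parallel to [s]: [(s.s) u = (s.u) s + s x (u x s)] with [u x s = 0] *)
have par : dot3 s s *: u = dot3 s u *: s.
  by apply/eqP; rewrite -subr_eq0 -cross3_cross -/w (dot3_eq0 w0) cross3_0r.
have := congr1 (dot3 n) par; rewrite ![dot3 n (_ *: _)]dot3C !dot3Zl ![dot3 _ n]dot3C ns.
by rewrite mulr0 => /eqP; rewrite mulf_eq0 (negbTE s0) /= => /eqP.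
Qed.

Lemma dot3_comb (a b : R) (x y : V3) :
  dot3 (a *: x + b *: y) (a *: x + b *: y)
  = a ^+ 2 * dot3 x x + 2 * a * b * dot3 x y + b ^+ 2 * dot3 y y.
Proof. by rewrite !dot3E !mxE; ring. Qed.

Lemma dot3_cross_cross (n v : V3) :
  dot3 (cross3 n v) (cross3 n v) = dot3 n n * dot3 v v - dot3 n v ^+ 2.
Proof. by rewrite !dot3E !cross3E; ring. Qed.

Lemma cross3_combr (n x y : V3) (a b : R) :
  cross3 n (a *: x + b *: y) = a *: cross3 n x + b *: cross3 n y.
Proof.
by apply/rowP => i; case: (ord3P i) => ->; rewrite !(cross3E, mxE); ring.
Qed.

(* The infinitesimal form of rotational covariance.  Let [Dp], [Dx] and [Ds]
   be the derivatives of a component [c] of a vector field [v] in momentum,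
   position and spin at a point [(x, p, s)].  Only the three cyclic pairs
   [(a, b)] are needed. *)
Lemma rotation_generator (n x p s v Ds : V3) (Dx Dp : 'I_3 -> R) (c : 'I_3) :
  (forall a : 'I_3, Dx a = 0) ->
  (forall a b : 'I_3,
     p 0 b * Dp a + x 0 b * Dx a - (p 0 a * Dp b + x 0 a * Dx b)
     + dot3 s (cross3 (eps_row a b) Ds)
     = kdelta a c * v 0 b - kdelta b c * v 0 a) ->
  \sum_(d < 3) cross3 n p 0 d * Dp d + dot3 (cross3 n s) Ds = cross3 n v 0 c.
Proof.
move=> Dx0 rel; have [e12 e20 e01] := eps_row_cyclic.
have := congr1 ( *%R (n 0 i0)) (rel i1 i2).
have := congr1 ( *%R (n 0 i1)) (rel i2 i0).
have := congr1 ( *%R (n 0 i2)) (rel i0 i1).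
rewrite !Dx0 !mulr0 !addr0.
by case: (ord3P c) => ->;
  rewrite e12 e20 e01 /kdelta sum3 !dot3E !cross3E /e3 !mxE /=; lra.
Qed.

End Vectors.
Arguments eps_row {R}.

Section Calculus.
Variable R : realType.

Lemma is_derive_affine (U W : normedModType R) (f : U -> W) (a v : U) (d : W) :
  (forall h : R, h != 0 -> f (h *: v + a) - f a = h *: d) -> is_derive a v f d.
Proof.
move=> fd.
have qd : (fun h : R => h^-1 *: ((f \o shift a) (h *: v) - f a)) @ 0^' --> d.
  apply: cvg_near_cst; near=> h.
  have h0 : h != 0 by near: h; exact: nbhs_dnbhs_neq.
  by rewrite /= fd // scalerA mulVf // scale1r.
have df : derivable f a v by apply: cvgP qd.
by constructor => //; apply: cvg_lim.
Unshelve. all: by end_near. Qed.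

Lemma is_derive_coord (U : normedModType R) m n (F : U -> 'M[R]_(m, n))
    (y v : U) (dF : 'M[R]_(m, n)) i j :
  is_derive y v F dF -> is_derive y v (fun w => F w i j) (dF i j).
Proof.
move=> [dF_ex <-].
have qd : (fun h : R => h^-1 *: (((fun w => F w i j) \o shift y) (h *: v)
             - F y i j)) @ 0^' --> 'D_v F y i j.
  rewrite (_ : (fun h : R => _) = (fun M : 'M[R]_(m, n) => M i j)
              \o (fun h : R => h^-1 *: ((F \o shift y) (h *: v) - F y))).
    exact: (continuous_cvg _ (@coord_continuous _ m n i j _) dF_ex).
  by apply: funext => h /=; rewrite [RHS]mxE [in RHS]mxE [in RHS]mxE.
have df : derivable (fun w => F w i j) y v by apply: cvgP qd.
by constructor => //; apply: cvg_lim.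
Qed.

Lemma is_derive_pair (U W1 W2 : normedModType R) (f1 : U -> W1) (f2 : U -> W2)
    (a v : U) (d1 : W1) (d2 : W2) :
  is_derive a v f1 d1 -> is_derive a v f2 d2 ->
  is_derive a v (fun w => (f1 w, f2 w)) (d1, d2).
Proof.
move=> [D1 <-] [D2 <-].
have qd : (fun h : R => h^-1 *: (((fun w => (f1 w, f2 w)) \o shift a) (h *: v)
             - (f1 a, f2 a))) @ 0^' --> ('D_v f1 a, 'D_v f2 a).
  exact: (cvg_pair D1 D2).
have df : derivable (fun w => (f1 w, f2 w)) a v by apply: cvgP qd.
by constructor => //; apply: cvg_lim.
Qed.

Lemma is_derive_scalel (W : normedModType R) (k : R -> R) (dk t : R) (w : W) :
  is_derive t 1 k dk -> is_derive t 1 (fun s => k s *: w) (dk *: w).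
Proof.
move=> [Dk <-].
have qd : (fun h : R => h^-1 *: (((fun s => k s *: w) \o shift t) (h *: 1)
             - k t *: w)) @ 0^' --> 'D_1 k t *: w.
  have -> : (fun h : R => h^-1 *: (((fun s => k s *: w) \o shift t) (h *: 1)
               - k t *: w))
          = (fun h : R => (h^-1 *: ((k \o shift t) (h *: (1 : R)) - k t)) *: w).
    by apply/funext => h /=; rewrite -scalerBl scalerA.
  exact: cvgZr_tmp.
have df : derivable (fun s => k s *: w) t 1 by apply: cvgP qd.
by constructor => //; apply: cvg_lim.
Qed.

Lemma is_derive_comp (U W : normedModType R) (G : U -> W) (g : R -> U) (t : R) (dg : U) :
  differentiable G (g t) -> is_derive t 1 g dg ->
  is_derive t 1 (G \o g) ('D_dg G (g t)).
Proof.
move=> dG Dg.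
have dgt : differentiable g t by apply/derivable1_diffP; exact: ex_derive.
have dGg : differentiable (G \o g) t by exact: differentiable_comp.
have Dd : derivable (G \o g) t 1 by apply/derivable1_diffP.
constructor => //.
have Hg : 'd g t 1 = dg by rewrite -deriveE // derive_val.
by rewrite deriveE // diff_comp //= Hg [RHS]deriveE.
Qed.

End Calculus.

Section Rotation.
Variable R : realType.
Local Notation V3 := 'rV[R]_3.

(* The rotation of [v] by the angle [t] about a unit axis [n] orthogonal to [v]. *)
Definition rot (n v : V3) (t : R) : V3 := cos t *: v + sin t *: cross3 n v.

Lemma rot0 (n v : V3) : rot n v 0 = v.
Proof. by rewrite /rot cos0 sin0 scale1r scale0r addr0. Qed.

Lemma rot_pi (n v : V3) : rot n v pi = - v.
Proof. by rewrite /rot cospi sinpi scaleN1r scale0r addr0. Qed.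

Variables n v : V3.
Hypotheses (n_unit : dot3 n n = 1) (n_v : dot3 n v = 0).

Lemma is_derive_rot (t : R) : is_derive t 1 (rot n v) (cross3 n (rot n v t)).
Proof.
have -> : cross3 n (rot n v t) = (- sin t) *: v + cos t *: cross3 n v.
  rewrite cross3_combr cross3_cross n_v n_unit scale0r sub0r scale1r addrC.
  by rewrite scalerN scaleNr.
by apply: is_deriveD; apply: is_derive_scalel.
Qed.

Lemma dot3_rot (t : R) : dot3 (rot n v t) (rot n v t) = dot3 v v.
Proof.
rewrite dot3_comb dot3_cross_cross n_unit n_v dot3C (dot3_cross_self n v).2.
by rewrite expr0n /= subr0 mul1r mulr0 addr0 -mulrDl cos2Dsin2 mul1r.
Qed.

End Rotation.

Section Pairing.
Variable R : realType.

Lemma pairing_constant (U : normedModType R) (f : U -> 'rV[R]_3) (g g' : R -> U)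
    (q : R -> 'rV[R]_3) (n : 'rV[R]_3) :
  (forall t : R, differentiable f (g t)) ->
  (forall t : R, is_derive t 1 g (g' t)) ->
  (forall t : R, is_derive t 1 q (cross3 n (q t))) ->
  (forall t : R, 'D_(g' t) f (g t) = cross3 n (f (g t))) ->
  forall t t', dot3 (f (g t)) (q t) = dot3 (f (g t')) (q t').
Proof.
move=> df dg dq cov t t'.
apply: (@is_derive_0_is_cst _ (fun s => dot3 (f (g s)) (q s))) => s.
have dfg := is_derive_comp (df s) (dg s); rewrite cov in dfg.
have -> : (fun s => dot3 (f (g s)) (q s))
        = \sum_(c < 3) ((fun s => f (g s) 0 c) * (fun s => q s 0 c)).
  by apply/funext => s'; rewrite /dot3 fct_sumE.
apply: is_derive_eq.
  by apply: is_derive_sum => c; apply: is_deriveM;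
    [exact: (is_derive_coord 0 c dfg)|exact: (is_derive_coord 0 c (dq s))].
rewrite -[RHS](dot3_cross_skew n (f (g s)) (q s)) dot3C /dot3 -big_split /=.
by apply: eq_bigr => c _; rewrite /GRing.scale /=; ring.
Qed.

End Pairing.

Section PhaseSpaceCalculus.
Variable R : realType.

Lemma differentiable_fst (U V : normedModType R) (y : U * V) :
  differentiable (@fst U V) y.
Proof.
pose lin := GRing.isLinear.Build _ _ _ _ (@fst U V)
  (fun (a : R) (x z : U * V) => erefl (a *: x.1 + z.1)).
pose f : {linear (U * V)%type -> U} := HB.pack (@fst U V) lin.
apply: (@linear_differentiable _ _ _ f) => z.
exact: cvg_fst.
Qed.

Lemma derive_fst (U V W : normedModType R) (F : U -> W) (y v : U * V) :
  'D_v (F \o fst) y = 'D_(v.1) F y.1.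
Proof. by []. Qed.

Lemma derive_fst_add (U V : normedModType R) (F : U -> R) (sigma : V -> R)
    (y v : U * V) :
  v.2 = 0 -> 'D_v (fun w => F w.1 + sigma w.2) y = 'D_(v.1) F y.1.
Proof.
move=> v2; rewrite /derive.
suff -> : (fun h : R => h^-1 *: ((fun w : U * V => F w.1 + sigma w.2) (h *: v + y)
                                  - (F y.1 + sigma y.2)))
        = (fun h : R => h^-1 *: (F (h *: v.1 + y.1) - F y.1)) by [].
apply/funext => h /=.
by rewrite v2 scaler0 add0r opprD addrACA subrr addr0.
Qed.

End PhaseSpaceCalculus.

Section SpinPhaseSpace.
Variable R : realType.
Local Notation V3 := 'rV[R]_3.

Lemma derive_momentum_spin (f : Gamma1 R -> R) (y : Gamma1 R) (u w : V3) :
  differentiable f y ->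
  'D_(((0 : V3), u), w) f y
  = \sum_(d < 3) u 0 d * 'D_(dp1 d) f y + dot3 w (grads f y).
Proof.
move=> df.
have -> : (((0 : V3), u), w) = \sum_d u 0 d *: dp1 d + \sum_d w 0 d *: ds1 d.
  rewrite !sum3 /dp1 /ds1 [u in LHS]row_sum_delta [w in LHS]row_sum_delta !sum3 /=.
  apply/pair_equal_spec; split => /=; last by rewrite !scaler0 !add0r.
  by apply/pair_equal_spec; split => /=; rewrite !scaler0 !addr0.
rewrite deriveE // linearD !linear_sum /dot3; congr (_ + _);
  by apply: eq_bigr => d _; rewrite linearZ /= -deriveE // mxE.
Qed.

Lemma derive_P1 (a : 'I_3) (y v : Gamma1 R) : 'D_v (P1_i a) y = p1 v 0 a.
Proof.
have [_ ->] // : is_derive y v (P1_i a) (p1 v 0 a).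
by apply: is_derive_affine => h _; rewrite /P1_i /p1 /= !mxE addrK.
Qed.

Lemma derive_J1 (S : R) (a b : 'I_3) (y v : Gamma1 R) :
  'D_v (J1 S a b) y =
    x1 v 0 a * p1 y 0 b + x1 y 0 a * p1 v 0 b
    - (x1 v 0 b * p1 y 0 a + x1 y 0 b * p1 v 0 a)
    + S * dot3 (eps_row a b) (sh1 v).
Proof.
have Dx c : is_derive y v (fun w => x1 w 0 c) (x1 v 0 c).
  by apply: is_derive_affine => h _; rewrite /x1 /= !mxE addrK.
have Dp c : is_derive y v (fun w => p1 w 0 c) (p1 v 0 c).
  by apply: is_derive_affine => h _; rewrite /p1 /= !mxE addrK.
have Ds : is_derive y v (fun w => \sum_c eps3 a b c * s1 S w 0 c)
                        (S * dot3 (eps_row a b) (sh1 v)).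
  apply: is_derive_affine => h _; rewrite -sumrB /dot3 !mulr_sumr.
  rewrite scaler_sumr; apply: eq_bigr => c _.
  by rewrite /s1 /sh1 /= !mxE /GRing.scale /=; ring.
have [_ ->] // := is_deriveD (is_deriveB (is_deriveM (Dx a) (Dp b))
                                         (is_deriveM (Dx b) (Dp a))) Ds.
by rewrite /GRing.scale /=; ring.
Qed.

Lemma pb1_momentum (S : R) (a : 'I_3) (f : Gamma1 R -> R) (z : Gamma1 R) :
  pb1 S (P1_i a) f z = - 'D_(dx1 a) f z.
Proof.
rewrite /pb1.
have -> : grads (P1_i a) z = 0 by apply/rowP => d; rewrite !mxE derive_P1 /p1 /= mxE.
rewrite cross3_0l dot3_0r mulr0 addr0.
under eq_bigr => d _ do rewrite !derive_P1 /p1 /= mxE mul0r sub0r.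
by rewrite sumrN sum_e3.
Qed.

Lemma pb1_angular (S : R) (a b : 'I_3) (f : Gamma1 R -> R) (z : Gamma1 R) :
  S != 0 ->
  pb1 S (J1 S a b) f z =
    p1 z 0 b * 'D_(dp1 a) f z + x1 z 0 b * 'D_(dx1 a) f z
    - (p1 z 0 a * 'D_(dp1 b) f z + x1 z 0 a * 'D_(dx1 b) f z)
    + dot3 (sh1 z) (cross3 (eps_row a b) (grads f z)).
Proof.
move=> S0; rewrite /pb1.
have -> : grads (J1 S a b) z = S *: eps_row a b.
  apply/rowP => j; rewrite !mxE derive_J1 /x1 /p1 /sh1 /= dot3_e3r !mxE.
  by ring.
rewrite cross3Zl dot3Zr mulrA mulVf // mul1r; congr (_ + _).
rewrite (eq_bigr (fun d => e3 d 0 a * (p1 z 0 b * 'D_(dp1 d) f z + x1 z 0 b * 'D_(dx1 d) f z)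
                        - e3 d 0 b * (p1 z 0 a * 'D_(dp1 d) f z + x1 z 0 a * 'D_(dx1 d) f z))).
  by rewrite sumrB !sum_e3.
move=> d _; rewrite !derive_J1 /x1 /p1 /sh1 /= !dot3_0r !mxE.
(* naming the two derivatives of [f] spares [ring] comparing them *)
move: ('D_(dp1 d) f z) ('D_(dx1 d) f z) => Dp Dx.
by ring.
Qed.

End SpinPhaseSpace.

Section SpinCase.
Variables (R : realType) (S : R) (A : Gamma1 R -> 'rV[R]_3).
Local Notation V3 := 'rV[R]_3.
Hypothesis S_neq0 : S != 0.
Hypothesis A_diff : forall z, differentiable A z.
Hypothesis A_translation : forall (a b : 'I_3) z, on_Gamma1 z ->
  pb1 S (P1_i a) (fun w => A w 0 b) z = 0.
Hypothesis A_rotation : forall (a b c : 'I_3) z, on_Gamma1 z ->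
  pb1 S (J1 S a b) (fun w => A w 0 c) z = kdelta a c * A z 0 b - kdelta b c * A z 0 a.
Hypothesis A_time_reversal : forall z, on_Gamma1 z -> A (T1 z) = A z.

Lemma differentiable_A_comp (c : 'I_3) (z : Gamma1 R) :
  differentiable (fun w => A w 0 c) z.
Proof. exact: differentiable_comp (A_diff z) (differentiable_coord _ 0 c). Qed.

Lemma derive_A_comp (c : 'I_3) (z v : Gamma1 R) :
  'D_v (fun w => A w 0 c) z = 'D_v A z 0 c.
Proof.
by have [_ ->] := is_derive_coord 0 c (derivableP (@diff_derivable _ _ _ _ _ v (A_diff z))).
Qed.

Lemma A_position_independent (a b : 'I_3) (z : Gamma1 R) : on_Gamma1 z ->
  'D_(dx1 a) (fun w => A w 0 b) z = 0.
Proof. by move=> zG; apply/eqP; rewrite -oppr_eq0 -(pb1_momentum S) A_translation. Qed.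

Lemma A_rotation_covariant (n : V3) (z : Gamma1 R) : on_Gamma1 z ->
  'D_(((0 : V3), cross3 n (p1 z)), cross3 n (sh1 z)) A z = cross3 n (A z).
Proof.
move=> zG; apply/rowP => c.
rewrite -derive_A_comp derive_momentum_spin; last exact: differentiable_A_comp.
apply: (@rotation_generator R n (x1 z) _ _ _ _
         (fun d => 'D_(dx1 d) (fun w => A w 0 c) z)) => [a|a b].
  exact: A_position_independent.
by rewrite -A_rotation // pb1_angular.
Qed.

(* The theorem for spin [S <> 0]: rotating [(p, shat)] by the angle [pi] about
   a common unit normal [n] yields the time-reversed state, while [A . p] is
   conserved along the rotation; hence [A . p = - A . p]. *)
Theorem spin_momentum_orthogonal (z : Gamma1 R) : on_Gamma1 z ->
  dot3 (A z) (p1 z) = 0.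
Proof.
move=> zG.
have [n [n_unit n_p n_s]] := exists_common_unit_normal (p1 z) (sh1 z).
pose g t : Gamma1 R := ((x1 z, rot n (p1 z) t), rot n (sh1 z) t).
pose g' t : Gamma1 R :=
  (((0 : V3), cross3 n (rot n (p1 z) t)), cross3 n (rot n (sh1 z) t)).
have g_on t : on_Gamma1 (g t) by rewrite /on_Gamma1 /g /= dot3_rot.
have g_flow (t : R) : is_derive t 1 g (g' t).
  rewrite /g /g'; apply: is_derive_pair; last exact: is_derive_rot n_unit n_s t.
  by apply: is_derive_pair; last exact: is_derive_rot n_unit n_p t.
have := pairing_constant (fun t => A_diff (g t)) g_flow (is_derive_rot n_unit n_p)
  (fun t => A_rotation_covariant n (g_on t)) 0 pi.
have -> : g 0 = z by rewrite /g !rot0 -!surjective_pairing.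
have -> : g pi = T1 z by rewrite /g !rot_pi.
rewrite A_time_reversal // rot0 rot_pi -scaleN1r dot3Zr.
lra.
Qed.

End SpinCase.

Section SpinZeroCase.
Variables (R : realType) (A : Gamma0 R -> 'rV[R]_3).
Hypothesis A_diff : forall z, differentiable A z.
Hypothesis A_translation : forall (a b : 'I_3) z,
  pb0 (P0_i a) (fun w => A w 0 b) z = 0.
Hypothesis A_rotation : forall (a b c : 'I_3) z,
  pb0 (J0 a b) (fun w => A w 0 c) z = kdelta a c * A z 0 b - kdelta b c * A z 0 a.
Hypothesis A_time_reversal : forall z, A (T0 z) = A z.

Lemma pb1_lift (S : R) (F G : Gamma0 R -> R) (sigma : 'rV[R]_3 -> R) (z : Gamma1 R) :
  pb1 S (fun w => F w.1 + sigma w.2) (G \o fst) z = pb0 F G z.1.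
Proof.
rewrite /pb1 /pb0.
have -> : grads (G \o fst) z = 0.
  by apply/rowP => d; rewrite !mxE derive_fst derive0.
rewrite cross3_0r dot3_0r mulr0 addr0; apply: eq_bigr => d _.
by rewrite !derive_fst_add // !derive_fst.
Qed.

(* The spinless theorem follows from the spinning one applied to [A \o fst]
   with [S = 1]: a spin-independent [A] satisfies all the hypotheses. *)
Theorem spinless_momentum_orthogonal (z : Gamma0 R) : dot3 (A z) z.2 = 0.
Proof.
have e0_unit : on_Gamma1 ((z, e3 i0) : Gamma1 R) by rewrite /on_Gamma1 dot3_e3r mxE.
apply: (@spin_momentum_orthogonal R 1 (A \o fst) (oner_neq0 R) _ _ _ _ _ e0_unit).
- by move=> w; apply: differentiable_comp; [exact: differentiable_fst|exact: A_diff].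
- move=> a b w _; rewrite -(A_translation a b w.1) -(pb1_lift 1 _ _ (fun _ => 0)).
  have -> : P1_i a = (fun y => P0_i a y.1 + (fun _ : 'rV[R]_3 => 0) y.2).
    by apply/funext => y; rewrite addr0.
  by [].
- move=> a b c w _.
  by rewrite -A_rotation -(pb1_lift 1 _ _ (fun s => \sum_k eps3 a b k * (1 *: s) 0 k)).
- by move=> w _; rewrite /= A_time_reversal.
Qed.

End SpinZeroCase.

Theorem mainTheorem10 (R : realType) (c m : R) (hc : 0 < c) (hm : 0 < m) :
  (* case (i): spin zero *)
  (forall A : Gamma0 R -> 'rV[R]_3,
     C1 A ->
     (forall (a b : 'I_3) z, pb0 (P0_i a) (fun w => A w 0 b) z = 0) ->
     (forall (a b c' : 'I_3) z,
        pb0 (J0 a b) (fun w => A w 0 c') z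
        = kdelta a c' * A z 0 b - kdelta b c' * A z 0 a) ->
     (forall z, A (T0 z) = A z) ->
     forall z, \sum_(a < 3) A z 0 a * P0_i a z = 0)
  /\
  (* case (ii): spin S > 0 *)
  (forall (S : R), 0 < S ->
   forall A : Gamma1 R -> 'rV[R]_3,
     C1 A ->
     (forall (a b : 'I_3) z, on_Gamma1 z ->
        pb1 S (P1_i a) (fun w => A w 0 b) z = 0) ->
     (forall (a b c' : 'I_3) z, on_Gamma1 z ->
        pb1 S (J1 S a b) (fun w => A w 0 c') z
        = kdelta a c' * A z 0 b - kdelta b c' * A z 0 a) ->
     (forall z, on_Gamma1 z -> A (T1 z) = A z) ->
     forall z, on_Gamma1 z -> \sum_(a < 3) A z 0 a * P1_i a z = 0).
Proof.
split.
- move=> A [A_diff _] A_translation A_rotation A_time_reversal z.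
  exact: spinless_momentum_orthogonal A_diff A_translation A_rotation A_time_reversal z.
- move=> S S_gt0 A [A_diff _] A_translation A_rotation A_time_reversal z zG.
  exact: spin_momentum_orthogonal (lt0r_neq0 S_gt0) A_diff A_translation A_rotation A_time_reversal z zG.
Qed.
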